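(* For every $i\ge1$, $$P_i=\sum_{a_1+2a_2+\cdots+ia_i=i}(-1)^{a_1+\cdots+a_i+1}\frac{(a_1+\cdots+a_i-1)!}{a_1!\cdots a_i!}\,l_1^{a_1}\cdots l_i^{a_i},$$ the sum being over tuples $(a_1,\dots,a_i)$ of nonnegative integers.
   Context: ${\cal H}_R$ is the commutative polynomial algebra over $\mathbb{Q}$ on isomorphism classes of rooted trees (finite connected simply connected graphs with a root, edges oriented away from the root). A ladder is a rooted tree in which every vertex has at most one outgoing edge; $l_i$ denotes the unique ladder with $i$ vertices. For $n\ge1$ let $\Psi_n(X_1,\dots,X_n)=\sum_{a_1+2a_2+\cdots+na_n=n}\frac{X_1^{a_1}\cdots X_n^{a_n}}{a_1!\cdots a_n!}$. Define $P_1=l_1$ and, for $n\ge2$, $P_n=l_n-\Psi_n(P_1,\dots,P_{n-1},0)$ (computed in ${\cal H}_R$). *)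

From HB Require Import structures.
From mathcomp Require Import all_boot all_order all_algebra.
Set Implicit Arguments. Unset Strict Implicit. Unset Printing Implicit Defensive.
Import Order.TTheory GRing.Theory Num.Theory.
Local Open Scope ring_scope.

Section Ladders.
Variable A : comAlgType rat.

(* Exponent tuples (a_1,...,a_n), stored as a : 'I_n -> 'I_(n+1), with
   a_(k+1) = a k (each a_k <= n automatically when sum k a_k = n). *)
Definition weight (n : nat) (a : {ffun 'I_n -> 'I_n.+1}) : nat :=
  (\sum_(k < n) k.+1 * a k)%N.

Definition asum (n : nat) (a : {ffun 'I_n -> 'I_n.+1}) : nat :=
  (\sum_(k < n) a k)%N.

Definition afact (n : nat) (a : {ffun 'I_n -> 'I_n.+1}) : nat :=
  (\prod_(k < n) (a k)`!)%N.

Definition monom (n : nat) (X : nat -> A) (a : {ffun 'I_n -> 'I_n.+1}) : A :=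
  \prod_(k < n) X k.+1 ^+ a k.

Definition Psi (n : nat) (X : nat -> A) : A :=
  \sum_(a : {ffun 'I_n -> 'I_n.+1} | weight a == n)
     ((afact a)%:R^-1 : rat) *: monom X a.

Variable l : nat -> A.

(* Pfun m k = P_k for 1 <= k <= m, and 0 otherwise. *)
Fixpoint Pfun (m : nat) : nat -> A :=
  match m with
  | 0 => fun _ => 0
  | m'.+1 =>
      let f := Pfun m' in
      fun k => if k == m'.+1 then
                 (if m' == 0%N then l 1 else l m'.+1 - Psi m'.+1 f)
               else f k
  end.

(* P_n ; for n >= 2, P_n = l_n - Psi_n(P_1,...,P_(n-1),0). *)
Definition P (n : nat) : A := Pfun n n.

Definition Pformula (i : nat) : A :=
  \sum_(a : {ffun 'I_i -> 'I_i.+1} | weight a == i)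
     (((-1) ^+ (asum a).+1 * ((asum a).-1)`!%:R / (afact a)%:R : rat)
        *: monom l a).

End Ladders.

(* Write L = l_1 t + l_2 t^2 + ... . Since Psi_n(X_1, ..., X_n) is the t^n
   coefficient of exp (X_1 t + ... + X_n t^n), the recursion defining P_n says
   that 1 + L = exp (P_1 t + P_2 t^2 + ...) up to order n, for every n.  Hence
   P_1 t + P_2 t^2 + ... = log (1 + L) = sum_s (-1)^(s+1) L^s / s, and the
   multinomial expansion of the t^i coefficient of L^s / s! gives the formula.
   Power series are modelled by polynomials compared below a given degree;
   exp (p + q) = exp p * exp q and exp (log (1 + p)) = 1 + p follow from the
   uniqueness of solutions of y' = g y with prescribed constant term. *)

From HB Require Import structures.
From mathcomp Require Import all_boot all_order all_algebra.
From mathcomp Require Import zify.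
Set Implicit Arguments. Unset Strict Implicit. Unset Printing Implicit Defensive.
Import GRing.Theory Num.Theory.
Local Open Scope ring_scope.

Section Truncation.
Variable R : nzRingType.
Implicit Types p q r : {poly R}.

Definition agree (n : nat) p q := forall m, (m < n)%N -> p`_m = q`_m.
Definition vanish (n : nat) p := forall m, (m < n)%N -> p`_m = 0.

Lemma agree_refl n p : agree n p p.
Proof. by []. Qed.

Lemma agree_sym n p q : agree n p q -> agree n q p.
Proof. by move=> pq m /pq. Qed.

Lemma agree_trans n p q r : agree n p q -> agree n q r -> agree n p r.
Proof. by move=> pq qr m lt_mn; rewrite pq ?qr. Qed.

Lemma agreeW n n' p q : (n' <= n)%N -> agree n p q -> agree n' p q.
Proof. by move=> le_n'n pq m lt_mn'; apply/pq/(leq_trans lt_mn'). Qed.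

Lemma agreeE n p q : agree n p q <-> vanish n (p - q).
Proof.
split=> pq m /pq; first by rewrite coefB => ->; rewrite subrr.
by rewrite coefB => /eqP; rewrite subr_eq0 => /eqP.
Qed.

Lemma agreeD n p p' q q' :
  agree n p p' -> agree n q q' -> agree n (p + q) (p' + q').
Proof. by move=> pp' qq' m lt_mn; rewrite !coefD pp' ?qq'. Qed.

Lemma agreeB n p p' q q' :
  agree n p p' -> agree n q q' -> agree n (p - q) (p' - q').
Proof. by move=> pp' qq' m lt_mn; rewrite !coefB pp' ?qq'. Qed.

Lemma agreeM n p p' q q' :
  agree n p p' -> agree n q q' -> agree n (p * q) (p' * q').
Proof.
move=> pp' qq' m lt_mn; rewrite !coefM; apply: eq_bigr => j _.
have le_jm : (j <= m)%N by rewrite -ltnS.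
by rewrite pp' ?qq' //; apply: leq_ltn_trans lt_mn; [apply: leq_subr|].
Qed.

Lemma agreeX n p q k : agree n p q -> agree n (p ^+ k) (q ^+ k).
Proof.
by move=> pq; elim: k => [|k IHk] // ; rewrite !exprS; apply: agreeM.
Qed.

Lemma agree_sum n (I : finType) (F G : I -> {poly R}) :
  (forall i, agree n (F i) (G i)) -> agree n (\sum_i F i) (\sum_i G i).
Proof.
by move=> FG m lt_mn; rewrite !coef_sum; apply: eq_bigr => i _; rewrite FG.
Qed.

Lemma vanishW n n' p : (n' <= n)%N -> vanish n p -> vanish n' p.
Proof. by move=> le_n'n p0 m lt_mn'; apply/p0/(leq_trans lt_mn'). Qed.

Lemma vanishD n p q : vanish n p -> vanish n q -> vanish n (p + q).
Proof. by move=> p0 q0 m lt_mn; rewrite coefD p0 ?q0 ?addr0. Qed.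

Lemma vanishN n p : vanish n p -> vanish n (- p).
Proof. by move=> p0 m lt_mn; rewrite coefN p0 ?oppr0. Qed.

Lemma vanish_sum n (I : finType) (F : I -> {poly R}) :
  (forall i, vanish n (F i)) -> vanish n (\sum_i F i).
Proof. by move=> F0 m lt_mn; rewrite coef_sum big1 // => i _; rewrite F0. Qed.

Lemma vanishM n n' p q : vanish n p -> vanish n' q -> vanish (n + n') (p * q).
Proof.
move=> p0 q0 m lt_m; rewrite coefM big1 // => j _.
have [lt_jn|le_nj] := ltnP j n; first by rewrite p0 ?mul0r.
have := ltn_ord j; rewrite ltnS => le_jm; rewrite q0 ?mulr0 //; lia.
Qed.

Lemma vanishMl n p q : vanish n p -> vanish n (q * p).
Proof. by move=> p0; rewrite -[n]add0n; apply: vanishM. Qed.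

Lemma vanishX n p k : vanish n p -> vanish (n * k) (p ^+ k).
Proof.
move=> p0; elim: k => [|k IHk]; first by rewrite muln0.
by rewrite exprS mulnS; apply: vanishM.
Qed.

Lemma vanish_deriv n p : vanish n p -> vanish n.-1 p^`().
Proof. by move=> p0 m lt_m; rewrite coef_deriv p0 ?mul0rn //; lia. Qed.

Lemma vanishCX c n e : (n <= e)%N -> vanish n (c%:P * 'X^e).
Proof.
move=> le_ne m lt_mn; rewrite coefCM coefXn.
by case: eqP => [m_e|_]; [lia | rewrite mulr0].
Qed.

Lemma agreeDr n p q r : agree n p q -> vanish n r -> agree n (p + r) q.
Proof. by move=> pq r0 m lt_mn; rewrite coefD pq ?r0 ?addr0. Qed.

Lemma agreeMl n n' p q q' :
  vanish n p -> agree n' q q' -> agree (n + n') (p * q) (p * q').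
Proof. by move=> p0 /agreeE qq'; apply/agreeE; rewrite -mulrBr; apply: vanishM. Qed.

End Truncation.

Section TruncatedExpLog.
Variable A : comAlgType rat.
Implicit Types p q g y z : {poly A}.

Definition ratC (c : rat) : {poly A} := c%:A%:P.
HB.instance Definition _ := GRing.RMorphism.copy ratC (polyC \o in_alg A)%FUN.

Lemma coef_ratCM c p i : (ratC c * p)`_i = c *: p`_i.
Proof. by rewrite coefCM mulr_algl. Qed.

Lemma deriv_ratCM c p : (ratC c * p)^`() = ratC c * p^`().
Proof. exact: deriv_mulC. Qed.

Lemma ratCM_mulrn c p k : ratC c * (p *+ k) = ratC (c * k%:R) * p.
Proof. by rewrite rmorphM rmorph_nat mulr_natr mulrnAr mulrnAl. Qed.

Lemma eq0_mulrnS (x : A) k : x *+ k.+1 = 0 -> x = 0.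
Proof.
move=> xk0; have : (k.+1%:R^-1 : rat) *: (x *+ k.+1) = 0 by rewrite xk0 scaler0.
by rewrite -scaler_nat scalerA mulVf ?pnatr_eq0 // scale1r.
Qed.

Lemma agree_ode n g y z : y`_0 = z`_0 ->
  agree n.-1 y^`() (g * y) -> agree n.-1 z^`() (g * z) -> agree n y z.
Proof.
move=> yz0 y' z'; apply/agreeE.
have d' : agree n.-1 (y - z)^`() (g * (y - z)).
  by rewrite derivB mulrBr; apply: agreeB.
suff yz_vanish m : (m <= n)%N -> vanish m (y - z) by apply: yz_vanish.
elim: m => [|m IHm] le_mn k; first by [].
have {}IHm := IHm (ltnW le_mn).
rewrite ltnS leq_eqVlt => /orP[/eqP->|]; last exact: IHm.
case: m IHm le_mn => [|m] IHm le_mn; first by rewrite coefB yz0 subrr.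
apply: (@eq0_mulrnS _ m); rewrite -coef_deriv d'; last by lia.
by apply: (vanishMl _ IHm).
Qed.

Definition exp_trunc (N : nat) p := \sum_(j < N.+1) ratC (j`!%:R^-1) * p ^+ j.

Lemma exp_trunc0 N : exp_trunc N 0 = 1.
Proof.
rewrite /exp_trunc big_ord_recl big1 => [|j _]; last by rewrite expr0n mulr0.
by rewrite expr0 invr1 rmorph1 mulr1 addr0.
Qed.

Lemma coef0_exp_trunc N p : vanish 1 p -> (exp_trunc N p)`_0 = 1.
Proof.
move=> p0; rewrite coef_sum big_ord_recl big1 => [|j _]; last first.
  by rewrite coef_ratCM (vanishX (k := j.+1) p0) ?scaler0.
by rewrite coef_ratCM expr0 coef1 invr1 scale1r addr0.
Qed.

Lemma agree_exp_trunc n N p q :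
  agree n p q -> agree n (exp_trunc N p) (exp_trunc N q).
Proof. by move=> pq; apply: agree_sum => j; apply/agreeM/agreeX. Qed.

Lemma deriv_exp_trunc N p : (exp_trunc N.+1 p)^`() = p^`() * exp_trunc N p.
Proof.
rewrite /exp_trunc (big_morph _ (@derivD _) (deriv0 _)) big_ord_recl.
rewrite deriv_ratCM derivC mulr0 add0r big_distrr.
apply: eq_bigr => j _; rewrite lift0 deriv_ratCM deriv_exp ratCM_mulrn mulrCA.
congr (_ * (ratC _ * _)).
by rewrite factS natrM invfM mulrAC mulVf ?mul1r ?pnatr_eq0.
Qed.

Lemma exp_truncS N p v : vanish v p ->
  agree (v * N.+1) (exp_trunc N.+1 p) (exp_trunc N p).
Proof.
move=> p0; rewrite /exp_trunc [X in agree _ X _]big_ord_recr.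
by apply: agreeDr => //; apply/vanishMl/vanishX.
Qed.

Lemma exp_trunc_ode N v p : (0 < v)%N -> vanish v p ->
  agree (N.+1 * v).-1 (exp_trunc N p)^`() (p^`() * exp_trunc N p).
Proof.
move=> v_gt0 p0; case: N => [|N].
  rewrite /exp_trunc big_ord1 expr0 fact0 invr1 rmorph1 !mulr1 derivC mul1n.
  by apply/agree_sym/agreeE; rewrite subr0; apply: vanish_deriv.
rewrite deriv_exp_trunc.
have := agreeMl (vanish_deriv p0) (agree_sym (exp_truncS (N := N) p0)).
by apply: agreeW; nia.
Qed.

Lemma exp_truncD N v p q : (0 < v)%N -> vanish v p -> vanish v q ->
  agree (N.+1 * v) (exp_trunc N p * exp_trunc N q) (exp_trunc N (p + q)).
Proof.
move=> v_gt0 p0 q0; have pq0 := vanishD p0 q0.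
have vanish1 (r : {poly A}) : vanish v r -> vanish 1 r := vanishW v_gt0.
apply: (agree_ode (g := (p + q)^`())).
- by rewrite coef0M !coef0_exp_trunc ?mulr1 //; apply: vanish1.
- rewrite derivM derivD mulrDl mulrA [q^`() * _]mulrCA.
  apply: agreeD; apply: agreeM => //; exact: exp_trunc_ode.
- exact: exp_trunc_ode.
Qed.

Lemma exp_trunc_sum N v n (Y : 'I_n -> {poly A}) : (0 < v)%N ->
  (forall k, vanish v (Y k)) ->
  agree (N.+1 * v) (\prod_k exp_trunc N (Y k)) (exp_trunc N (\sum_k Y k)).
Proof.
move=> v_gt0; elim: n Y => [|n IHn] Y Y0; first by rewrite !big_ord0 exp_trunc0.
rewrite !big_ord_recr /=; apply: agree_trans (agreeM (IHn _ _) _) _ => //.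
by apply: exp_truncD => //; apply: vanish_sum.
Qed.

Lemma exp_trunc_monomial N c :
  agree N.+2 (exp_trunc N.+1 (c%:P * 'X^(N.+1))) (1 + c%:P * 'X^(N.+1)).
Proof.
rewrite /exp_trunc !big_ord_recl expr0 expr1 !invr1 !rmorph1 !mul1r addrA.
apply: agreeDr => //; apply: vanish_sum => j; apply: vanishMl.
by apply: vanishW (vanishX (k := j.+2) (vanishCX c (leqnn N.+1))); nia.
Qed.

Definition log1p_trunc (N : nat) p :=
  \sum_(s < N) ratC ((-1) ^+ s / s.+1%:R) * p ^+ s.+1.

Lemma deriv_log1p_trunc N p :
  (log1p_trunc N p)^`() = p^`() * \sum_(s < N) (- p) ^+ s.
Proof.
rewrite (big_morph _ (@derivD _) (deriv0 _)) big_distrr; apply: eq_bigr => s _.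
rewrite deriv_ratCM deriv_exp ratCM_mulrn divfK ?pnatr_eq0 //.
by rewrite rmorphXn rmorphN1 [(- p) ^+ _]exprNn mulrCA.
Qed.

Lemma vanish_log1p_trunc N p : vanish 1 p -> vanish 1 (log1p_trunc N p).
Proof.
move=> p0; apply: vanish_sum => s; apply: vanishMl.
by apply: vanishW (vanishX (k := s.+1) p0); rewrite mul1n.
Qed.

Lemma exp_log1p_trunc N p : vanish 1 p ->
  agree N.+1 (exp_trunc N (log1p_trunc N p)) (1 + p).
Proof.
move=> p0; have log0 := vanish_log1p_trunc N p0.
apply: (agree_ode (g := (log1p_trunc N p)^`())).
- by rewrite coef0_exp_trunc // coefD coef1 p0 ?addr0.
- by have := exp_trunc_ode (N := N) (ltn0Sn 0) log0; rewrite muln1.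
rewrite derivD derivC add0r deriv_log1p_trunc -mulrA.
have geom : (\sum_(s < N) (- p) ^+ s) * (1 + p) = 1 - (- p) ^+ N.
  by rewrite -opprB -[1 + p]opprK opprD addrC mulrN mulrC -subrX1 opprB.
rewrite geom mulrBr mulr1; apply/agree_sym/agreeDr => //.
apply/vanishN/vanishMl.
by apply: vanishW (vanishX (k := N) (vanishN p0)); rewrite mul1n.
Qed.

End TruncatedExpLog.

Arguments ratC {A}.

Lemma eqn_mulnD_small (M x y x' y' : nat) : (y < M)%N -> (y' < M)%N ->
  (M * x + y == M * x' + y')%N = (x == x') && (y == y').
Proof.
move=> lt_yM lt_y'M; apply/eqP/andP => [E|[/eqP-> /eqP->]] //.
have M_gt0 : (0 < M)%N by apply: leq_ltn_trans lt_yM.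
rewrite ![(M * _)%N]mulnC in E; split; apply/eqP.
  by have := congr1 (divn^~ M) E; rewrite /= !divnMDl // !divn_small ?addn0.
by have := congr1 (modn^~ M) E; rewrite /= !modnMDl !modn_small.
Qed.

Section Multinomial.
Variable A : comAlgType rat.
Implicit Types (X : nat -> A) (L : {poly A}).

Definition gen_poly (n : nat) X : {poly A} := \sum_(k < n) (X k.+1)%:P * 'X^(k.+1).

Lemma coef_gen_poly n X m : (gen_poly n X)`_m = if (0 < m <= n)%N then X m else 0.
Proof.
rewrite coef_sum; under eq_bigr => k _ do rewrite coefCM coefXn mulr_natr mulrb.
case: m => [|m]; first by rewrite big1.
under eq_bigr => k _ do rewrite eqSS eq_sym.
by rewrite -big_mkcond; apply: (big_ord1_eq _ (fun j => X j.+1)).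
Qed.

Lemma vanish_gen_poly n X : vanish 1 (gen_poly n X).
Proof. by case=> // _; rewrite coef_gen_poly. Qed.

Lemma size_gen_poly n X : (size (gen_poly n X) <= n.+1)%N.
Proof.
by apply/leq_sizeP => m lt_nm; rewrite coef_gen_poly; case: ifP => //; lia.
Qed.

Lemma agree_gen_poly k n X : (k <= n)%N -> agree k.+1 (gen_poly k X) (gen_poly n X).
Proof.
by move=> le_kn m lt_mk; rewrite !coef_gen_poly; case: ifP; case: ifP => //; lia.
Qed.

Lemma asum_le_weight n (a : {ffun 'I_n -> 'I_n.+1}) : (asum a <= weight a)%N.
Proof. by apply: leq_sum => k _; apply: leq_pmull. Qed.

Lemma weight_le n (a : {ffun 'I_n -> 'I_n.+1}) : (weight a <= n * n * n)%N.
Proof.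
apply: leq_trans (_ : \sum_(k < n) n * n <= _)%N.
  by apply: leq_sum => k _; apply: leq_mul; [exact: ltn_ord | rewrite -ltnS].
by rewrite sum_nat_const card_ord mulnA.
Qed.

(* The extra factor 'X^M in each exponent records asum a in the "high digits"
   of the degree; coef_monomials_graded reads it back when M exceeds every
   weight. *)
Lemma prod_exp_trunc_monomials n M X :
  \prod_(k < n) exp_trunc n ((X k.+1)%:P * 'X^(k.+1 + M)) =
  \sum_(a : {ffun 'I_n -> 'I_n.+1})
     ratC (afact a)%:R^-1 * ((monom X a)%:P * 'X^(M * asum a + weight a)).
Proof.
rewrite /exp_trunc bigA_distr_bigA; apply: eq_bigr => a _; rewrite big_split /=.
rewrite -rmorph_prod prodfV -natr_prod; congr (_ * _).
under eq_bigr => k _ do rewrite exprMn -rmorphXn -exprM.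
rewrite big_split /= -rmorph_prod prodrXr; congr (_ * 'X^_).
rewrite /asum /weight big_distrr -big_split; apply: eq_bigr => k _ /=.
by rewrite mulnDl mulnC addnC.
Qed.

Lemma coef_monomials_graded n M X s : (n * n * n < M)%N ->
  (\sum_(a : {ffun 'I_n -> 'I_n.+1})
     ratC (afact a)%:R^-1 * ((monom X a)%:P * 'X^(M * asum a + weight a))
  )`_(M * s + n)
  = \sum_(a : {ffun 'I_n -> 'I_n.+1} | (weight a == n) && (asum a == s))
      (afact a)%:R^-1 *: monom X a.
Proof.
move=> lt_cube_M; have lt_nM : (n < M)%N by nia.
rewrite coef_sum [RHS]big_mkcond; apply: eq_bigr => a _.
have lt_wM := leq_ltn_trans (weight_le a) lt_cube_M.
rewrite coef_ratCM coefCM coefXn eq_sym eqn_mulnD_small // andbC.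
by case: ifP => _; rewrite ?mulr1 ?mulr0 ?scaler0.
Qed.

Lemma coef_exp_trunc_mulXn N M d L s i :
  (size L <= d.+1)%N -> (d * N < M)%N -> (i < M)%N -> (s <= N)%N ->
  (exp_trunc N (L * 'X^M))`_(M * s + i) = (s`!%:R^-1 : rat) *: (L ^+ s)`_i.
Proof.
move=> sizeL lt_dN_M lt_iM le_sN.
rewrite coef_sum (bigD1 (Ordinal (le_sN : s < N.+1)%N)) //= big1 => [|j ne_js].
  by rewrite addr0 coef_ratCM exprMn -exprM coefMXn ltnNge leq_addr addKn.
rewrite coef_ratCM exprMn -exprM coefMXn.
case: ifP => [_|/negbT]; first by rewrite scaler0.
rewrite -leqNgt => le_Mj_Msi.
have [lt_js|lt_sj|eq_js] := ltngtP j s; last 2 first.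
- by nia.
- by move: ne_js; rewrite -val_eqE /= eq_js eqxx.
rewrite nth_default ?scaler0 //; apply: leq_trans (size_poly_exp_leq _ _) _.
have lt_sizeLj_M : ((size L).-1 * j < M)%N.
  by apply: leq_ltn_trans lt_dN_M; apply: leq_mul; [lia | rewrite -ltnS].
have : (M * j.+1 <= M * s)%N by rewrite leq_mul2l lt_js orbT.
rewrite mulnS; move: lt_sizeLj_M; set x := ((size L).-1 * j)%N; lia.
Qed.

Lemma sum_weight_asum n X s : (s <= n)%N ->
  \sum_(a : {ffun 'I_n -> 'I_n.+1} | (weight a == n) && (asum a == s))
     (afact a)%:R^-1 *: monom X a
  = (s`!%:R^-1 : rat) *: (gen_poly n X ^+ s)`_n.
Proof.
move=> le_sn.
have [M lt_cube_M] : exists M, (n * n * n < M)%N by exists (n * n * n).+1.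
have [le_n_sq le_sq_cube] : (n <= n * n)%N /\ (n * n <= n * n * n)%N.
  by case: (posnP n) => [->|n_gt0] //; rewrite !leq_pmulr.
pose Y (k : 'I_n) := (X k.+1)%:P * 'X^(k.+1 + M).
have Y0 k : vanish M.+1 (Y k) by apply: vanishCX; rewrite addSn ltnS leq_addl.
have sumY : \sum_k Y k = gen_poly n X * 'X^M.
  by rewrite /gen_poly big_distrl; apply: eq_bigr => k _; rewrite /Y exprD mulrA.
have lt_idx : (M * s + n < n.+1 * M.+1)%N by nia.
have := exp_trunc_sum (N := n) (ltn0Sn M) Y0 lt_idx.
rewrite prod_exp_trunc_monomials coef_monomials_graded // sumY => ->.
by apply: (coef_exp_trunc_mulXn (d := n)); rewrite ?size_gen_poly //; lia.
Qed.

Lemma sum_weight_by_asum n X (w : nat -> rat) :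
  \sum_(a : {ffun 'I_n -> 'I_n.+1} | weight a == n)
     (w (asum a) / (afact a)%:R) *: monom X a
  = \sum_(s < n.+1) (w s / s`!%:R) *: (gen_poly n X ^+ s)`_n.
Proof.
rewrite (partition_big (fun a => inord (asum a) : 'I_n.+1) predT) //.
apply: eq_bigr => s _.
rewrite (eq_bigl (fun a => (weight a == n) && (asum a == s))) => [|a]; last first.
  case: eqP => //= wn.
  have le_sn : (asum a <= n)%N by rewrite -{2}wn asum_le_weight.
  by rewrite -val_eqE /= inordK.
rewrite -scalerA -(sum_weight_asum X (ltn_ord s : s <= n)%N) scaler_sumr.
by apply: eq_bigr => a /andP[_ /eqP->]; rewrite scalerA.
Qed.

Lemma Psi_exp_trunc n X : Psi n X = (exp_trunc n (gen_poly n X))`_n.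
Proof.
have := sum_weight_by_asum n X (fun _ => 1); rewrite /Psi.
under eq_bigr => a _ do rewrite mul1r.
move=> ->; rewrite coef_sum; apply: eq_bigr => s _.
by rewrite coef_ratCM mul1r.
Qed.

End Multinomial.

Lemma sum_ord_vanishing_tail (V : nmodType) k N (g : nat -> V) : (k <= N)%N ->
  (forall s, (k <= s)%N -> g s = 0) -> \sum_(s < N) g s = \sum_(s < k) g s.
Proof.
move=> le_kN g0; rewrite (big_ord_widen N g le_kN) [RHS]big_mkcond.
by apply: eq_bigr => s _; case: ltnP => // /g0.
Qed.

Lemma log1p_coefE s :
  ((-1) ^+ s.+2 * s`!%:R / s.+1`!%:R : rat) = (-1) ^+ s / s.+1%:R.
Proof.
rewrite !exprS !mulN1r opprK factS natrM invfM mulrCA -mulrA mulrCA.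
by rewrite mulfV ?mulr1 // pnatr_eq0 -lt0n fact_gt0.
Qed.

Section Ladders.
Variable A : comAlgType rat.
Variable l : nat -> A.
Local Notation Pf := (Pformula l).

Lemma coef_log1p_gen_poly k N : (0 < k <= N)%N ->
  (log1p_trunc N (gen_poly N l))`_k = Pf k.
Proof.
case/andP=> k_gt0 le_kN.
rewrite /Pformula (sum_weight_by_asum _ _ (fun s => (-1) ^+ s.+1 * (s.-1)`!%:R)).
rewrite big_ord_recl expr0 coef1 gtn_eqF // scaler0 add0r coef_sum.
rewrite (sum_ord_vanishing_tail
  (g := fun s => (ratC ((-1) ^+ s / s.+1%:R) * gen_poly N l ^+ s.+1)`_k) le_kN).
  apply: eq_bigr => s _; rewrite coef_ratCM lift0 log1p_coefE; congr (_ *: _).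
  exact: (agree_sym (agreeX s.+1 (agree_gen_poly l le_kN)) (ltnSn k)).
move=> s le_ks; rewrite coef_ratCM (vanishX (k := s.+1) (vanish_gen_poly N l)) //.
  by rewrite scaler0.
by rewrite mul1n ltnS.
Qed.

Lemma log1p_gen_poly N :
  agree N.+1 (log1p_trunc N (gen_poly N l)) (gen_poly N Pf).
Proof.
move=> m lt_mN; rewrite coef_gen_poly; case: ifP => [|m_out].
  exact: coef_log1p_gen_poly.
have -> : m = 0%N by lia.
exact: vanish_log1p_trunc (vanish_gen_poly N l) _ (ltn0Sn 0).
Qed.

Lemma Pformula_recursion N :
  l N.+1 = Pf N.+1 + (exp_trunc N.+1 (gen_poly N Pf))`_N.+1.
Proof.
have lK : l N.+1 = (exp_trunc N.+1 (gen_poly N.+1 Pf))`_N.+1.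
  rewrite -(agree_exp_trunc N.+1 (log1p_gen_poly (N := N.+1))) //.
  rewrite (exp_log1p_trunc (vanish_gen_poly N.+1 l)) //.
  by rewrite coefD coef1 coef_gen_poly leqnn add0r.
have split_top : gen_poly N.+1 Pf = gen_poly N Pf + (Pf N.+1)%:P * 'X^(N.+1).
  by rewrite /gen_poly big_ord_recr.
rewrite lK split_top -(exp_truncD (v := 1)) ?muln1 //; last first.
- exact: vanishCX.
- exact: vanish_gen_poly.
rewrite (agreeM (@agree_refl _ _ _) (exp_trunc_monomial (N := N) (Pf N.+1))) //.
rewrite mulrDr mulr1 coefD mulrA coefMXn ltnn subnn coefMC.
by rewrite coef0_exp_trunc ?mul1r 1?addrC //; apply: vanish_gen_poly.
Qed.

Lemma Pfun_eq m k : Pfun l m k = if (0 < k <= m)%N then Pf k else 0.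
Proof.
elim: m k => [|m IHm] k /=; first by case: ifP => // /andP[]; lia.
case: eqP => [->|/eqP ne_km]; last first.
  by rewrite IHm [(k <= m.+1)%N]leq_eqVlt (negPf ne_km).
rewrite ltn0Sn leqnn; case: eqP => [->|_].
  by rewrite (Pformula_recursion 0) /gen_poly big_ord0 exp_trunc0 coef1 addr0.
rewrite Psi_exp_trunc; have -> : gen_poly m.+1 (Pfun l m) = gen_poly m Pf.
  rewrite /gen_poly big_ord_recr /= IHm ltnn andbF mul0r addr0.
  by apply: eq_bigr => j _; rewrite IHm ltn_ord.
by rewrite (Pformula_recursion m) addrK.
Qed.

End Ladders.

Theorem proposition9p3 (A : comAlgType rat) (l : nat -> A) (i : nat) :
  (1 <= i)%N -> P l i = Pformula l i.
Proof. by move=> i_gt0; rewrite /P Pfun_eq i_gt0 leqnn. Qed.
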